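(* Let $X$ be a cubic vertex-transitive graph for which $1$ is a simple eigenvalue, and let $\mathbf{z}$ be an eigenvector for the eigenvalue $1$ all of whose entries lie in $\{1,-1\}$. Let $V^+=\{x\in V(X)\mid \mathbf{z}(x)=1\}$, $V^-=\{x\in V(X)\mid \mathbf{z}(x)=-1\}$, and let $M$ be the set of edges of $X$ with one end in $V^+$ and the other in $V^-$. Then: (i) the induced subgraph $X[V^+]$ is a disjoint union of cycles all of the same length; (ii) $X[V^+]$ is isomorphic to $X[V^-]$, and $V^+$ and $V^-$ are blocks of imprimitivity of the action of $\mathrm{Aut}(X)$ on $V(X)$; (iii) $\{V^+,V^-\}$ is the unique partition of $V(X)$ into two parts such that both parts induce $2$-regular subgraphs of $X$; (iv) $M$ is a perfect matching of $X$; (v) $\mathrm{Aut}(X)$ fixes $M$ set-wise and acts transitively on the arcs of $M$ (ordered pairs $(x,y)$ with $xy\in M$).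
   Context: Eigenvalues are those of the adjacency matrix; an eigenvalue is simple if its eigenspace is $1$-dimensional. (For a vertex-transitive graph with a simple eigenvalue, an eigenvector with all entries $\pm1$ exists after scaling.) $X[W]$ denotes the subgraph induced by $W\subseteq V(X)$. *)

From mathcomp Require Import all_boot all_order all_fingroup all_algebra.
Set Implicit Arguments. Unset Strict Implicit. Unset Printing Implicit Defensive.
Import Order.TTheory GRing.Theory Num.Theory.

Section Graphs.
Variable n : nat.
Implicit Types (e : rel 'I_n) (W : {set 'I_n}).

Definition simple_graph e := symmetric e /\ irreflexive e.

Definition cubic e := forall x : 'I_n, #|[set y | e x y]| = 3.

Definition is_aut e (s : {perm 'I_n}) := forall x y, e (s x) (s y) = e x y.

Definition vertex_transitive e :=
  forall x y : 'I_n, exists s, is_aut e s /\ s x = y.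

Definition adjmx (R : nzRingType) e : 'M[R]_n := \matrix_(i, j) (e i j)%:R%R.

Definition induced_rel e W : rel 'I_n :=
  fun x y => [&& x \in W, y \in W & e x y].

Definition two_regular_in e W :=
  forall x, x \in W -> #|[set y in W | e x y]| = 2.

(* X[W] is a disjoint union of cycles, all of length k: the connected
   component (in X[W]) of each vertex of W is the vertex set of a cycle c
   (a duplicate-free cyclic sequence of k >= 3 vertices) and the edges of X
   inside this component are exactly the edges of the cycle c. *)
Definition union_of_cycles_of_length e W (k : nat) :=
  3 <= k /\
  forall x, x \in W -> exists c : seq 'I_n,
    [/\ uniq c, size c = k,
        (forall y, (y \in c) = connect (induced_rel e W) x y) &
        {in c &, forall y z, e y z = (z == next c y) || (y == next c z)}].

Definition union_of_equal_cycles e W :=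
  exists k, union_of_cycles_of_length e W k.

Definition induced_iso e (A B : {set 'I_n}) :=
  exists f : 'I_n -> 'I_n,
    [/\ {in A &, injective f}, f @: A = B &
        {in A &, forall x y, e (f x) (f y) = e x y}].

Definition aut_block e (B : {set 'I_n}) :=
  forall s, is_aut e s -> s @: B = B \/ [disjoint s @: B & B].

Definition perfect_matching e (M : {set {set 'I_n}}) :=
  (forall m, m \in M -> exists x y, m = [set x; y] /\ e x y) /\
  (forall x : 'I_n, #|[set m in M | x \in m]| = 1).

Definition aut_fixes_edgeset e (M : {set {set 'I_n}}) :=
  forall s, is_aut e s -> [set s @: m | m : {set 'I_n} in M] = M.

Definition arc_of e (M : {set {set 'I_n}}) (x y : 'I_n) := e x y /\ [set x; y] \in M.

Definition aut_arc_transitive_on e (M : {set {set 'I_n}}) :=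
  forall x y x' y', arc_of e M x y -> arc_of e M x' y' ->
    exists s, [/\ is_aut e s, s x = x' & s y = y'].

End Graphs.

From mathcomp Require Import all_boot all_fingroup all_algebra zify.
Import GRing.Theory Num.Theory.
Set Implicit Arguments. Unset Strict Implicit. Unset Printing Implicit Defensive.

(* A +-1 vector is a 1-eigenvector of a cubic graph exactly when every vertex has
   two neighbours on its own side and one on the other, i.e. when both sides induce
   2-regular subgraphs. Simplicity of the eigenvalue 1 therefore makes {V+, V-} the
   only such bipartition, so every automorphism fixes or swaps V+ and V-. Together
   with vertex transitivity this gives the blocks, the isomorphism X[V+] ~ X[V-] and
   the equal cycle lengths; the cross edges form a perfect matching because every
   vertex has exactly one neighbour on the other side. *)

Lemma exists_maximal_path (T : finType) (r : rel T) (x : T) :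
  exists p, [/\ uniq (x :: p), path r x p & forall t, r (last x p) t -> t \in x :: p].
Proof.
suff maxp k p : #|T| - size p <= k -> uniq (x :: p) -> path r x p ->
    exists p', [/\ uniq (x :: p'), path r x p' & forall t, r (last x p') t -> t \in x :: p'].
  exact: (maxp #|T| [::] (leq_subr _ _)).
have size_lt_card q : uniq (x :: q) -> size q < #|T|.
  by move/card_uniqP => /= <-; apply: max_card.
elim: k p => [|k IHk] p Hk Up Pp; first by have := size_lt_card _ Up; lia.
case: (pickP [pred t | r (last x p) t & t \notin x :: p]) => [t /andP[rt tp] | maxp].
  have Upt : uniq (x :: rcons p t) by rewrite -rcons_cons rcons_uniq tp.
  apply: (IHk (rcons p t)) => //; last by rewrite rcons_path Pp.
  by have := size_lt_card _ Upt; rewrite size_rcons in Hk *; lia.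
by exists p; split=> // t rt; apply: contraFT (maxp t) => tp; rewrite /= rt.
Qed.

Lemma next_neq_prev (T : eqType) (c : seq T) y :
  uniq c -> 2 < size c -> y \in c -> next c y != prev c y.
Proof.
move=> Uc c_gt2 yc; apply/eqP => nextE.
have [i s rotE] := rot_to yc.
have := next_prev Uc y; rewrite -nextE -!(next_rot i Uc) rotE.
have : uniq (rot i c) by rewrite rot_uniq.
have := size_rot i c; rewrite rotE.
case: s {rotE} => [|b [|d s]] /= sizeE; rewrite -?sizeE // in c_gt2.
rewrite !inE eqxx => /and3P[/norP[yb /norP[yd _]] _ _].
by rewrite eq_sym (negbTE yb) eqxx => /eqP; rewrite eq_sym (negbTE yd).
Qed.

Section TwoRegularComponents.
Variables (n : nat) (e : rel 'I_n) (W : {set 'I_n}).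
Hypotheses (e_sym : symmetric e) (e_irr : irreflexive e) (W2 : two_regular_in e W).
Local Notation r := (induced_rel e W).

Lemma induced_rel_sym : symmetric r.
Proof. by move=> x y; rewrite /induced_rel e_sym andbCA. Qed.

Lemma exists_induced_nbr_neq y a : y \in W -> exists2 b, r y b & b != a.
Proof.
move=> yW; have : 0 < #|[set t in W | e y t] :\ a|.
  by rewrite -(ltn_add2l (a \in [set t in W | e y t])) -cardsD1 W2 // addn0; case: (_ \in _).
case/card_gt0P=> b; rewrite !inE => /and3P[ba bW eyb].
by exists b; rewrite /induced_rel ?yW ?bW.
Qed.

Lemma two_regular_nbrs y a b c : a != b -> r y a -> r y b -> r y c -> (c == a) || (c == b).
Proof.
move=> ab /and3P[yW aW eya] /and3P[_ bW eyb] /and3P[_ cW eyc].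
have : [set t in W | e y t] = [set a; b].
  by apply/eqP; rewrite eq_sym eqEcard subUset !sub1set !inE aW eya bW eyb cards2 ab W2.
by move/setP/(_ c); rewrite !inE cW eyc.
Qed.

Lemma two_regular_cycle x : x \in W ->
  exists p, [/\ uniq (x :: p), 2 < size (x :: p) & path.cycle r (x :: p)].
Proof.
move=> xW; have [p [Up Pp maxp]] := exists_maximal_path r x.
case/lastP: p Up Pp maxp => [|q v] Up Pp maxp.
  by have [t /maxp] := exists_induced_nbr_neq x xW; rewrite inE => ->.
rewrite last_rcons in maxp; move: Pp; rewrite rcons_path => /andP[Pq uv].
have vW : v \in W by case/and3P: uv.
have [w vw wu] := exists_induced_nbr_neq (last x q) vW.
(* An interior vertex of the path already has its two neighbours on the path. *)
have wx : w = x.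
  apply: contraTeq (maxp w vw) => wx; rewrite inE (negbTE wx) mem_rcons inE.
  have wv : w != v by apply: contraTneq vw => ->; rewrite /induced_rel e_irr !andbF.
  rewrite (negbTE wv) /=; apply/negP => wq.
  case/splitPr: wq Up Pq wu => q1 q2 Up Pq wu.
  case: q2 Up Pq wu => [|b q2] Up Pq; first by rewrite last_cat eqxx.
  move=> _; move: Pq; rewrite cat_path /= => /and3P[_ aw /andP[wb _]].
  have ax : last x q1 \in x :: q1 by apply: mem_last.
  move: Up; rewrite rcons_cat -cat_cons cat_uniq => /and3P[_ /hasPn disj].
  rewrite /= mem_rcons !inE => /and3P[_ /norP[bv _] _].
  have [ab av] : last x q1 != b /\ last x q1 != v.
    split; apply: contraTneq ax => ->; apply: disj.
      by rewrite !inE eqxx orbT.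
    by rewrite !inE mem_rcons inE eqxx !orbT.
  rewrite induced_rel_sym in aw; rewrite induced_rel_sym in vw.
  by have := two_regular_nbrs ab aw wb vw; rewrite eq_sym (negbTE av) eq_sym (negbTE bv).
exists (rcons q v); split => //.
  by rewrite /= size_rcons; case: q wu {Pq maxp Up uv} => //=; rewrite wx eqxx.
by rewrite /path.cycle !rcons_path Pq uv last_rcons -wx.
Qed.

Lemma two_regular_component x : x \in W -> exists c : seq 'I_n,
  [/\ uniq c, 2 < size c, (forall y, (y \in c) = connect r x y) &
      {in c &, forall y z, e y z = (z == next c y) || (y == next c z)}].
Proof.
move=> xW; have [p [Uc c_gt2 Cc]] := two_regular_cycle xW; set c := x :: p in Uc c_gt2 Cc *.
have nbrsE y t : y \in c -> r y t = (t == next c y) || (t == prev c y).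
  move=> yc; have ynext := next_cycle Cc yc; have yprev := prev_cycle Cc yc.
  rewrite induced_rel_sym in yprev; apply/idP/idP => [yt|/orP[]/eqP-> //].
  exact: two_regular_nbrs (next_neq_prev Uc c_gt2 yc) ynext yprev yt.
have c_closed : closed r c.
  apply: (intro_closed (sym_connect_sym induced_rel_sym)) => u t /[swap] uc.
  by rewrite nbrsE // => /orP[]/eqP->; rewrite ?mem_next ?mem_prev.
exists c; split => // [y|y z yc zc].
  apply/idP/idP => [|/(closed_connect c_closed) <-]; last exact: mem_head.
  by apply: path_connect; move: Cc; rewrite /c /= rcons_path => /andP[].
have cW u : u \in c -> u \in W by move/(next_cycle Cc)/and3P=> [].
have -> : e y z = r y z by rewrite /induced_rel !cW.
by rewrite nbrsE // [y == _]eq_sym (canF_eq (prev_next Uc)).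
Qed.

End TwoRegularComponents.

Lemma card_nbrs_setC n (e : rel 'I_n) : cubic e ->
  forall (S : {set 'I_n}) x, (#|[set y in S | e x y]| + #|[set y in ~: S | e x y]| = 3)%N.
Proof.
move=> e_cubic S x; rewrite -(e_cubic x) -(cardsID S [set y | e x y]).
by congr addn; apply: eq_card => y; rewrite !inE andbC.
Qed.

Local Open Scope ring_scope.

Lemma oner_eqN1 (R : numDomainType) : (1 == -1 :> R) = false.
Proof. by rewrite eq_sym eqNr oner_eq0. Qed.

Section SignVectors.
Variables (R : numDomainType) (n : nat) (e : rel 'I_n).
Hypotheses (e_sym : symmetric e) (e_cubic : cubic e).
Implicit Types S : {set 'I_n}.

Definition signv S : 'rV[R]_n := \row_j (if j \in S then 1 else -1).

Lemma signv_eqN1 S x : (signv S 0 x == -1) = (x \notin S).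
Proof. by rewrite mxE; case: (x \in S); rewrite ?eqxx // oner_eqN1. Qed.

Lemma sum_signv_nbrs S x :
  \sum_(y | e x y) signv S 0 y = #|[set y in S | e x y]|%:R - #|[set y in ~: S | e x y]|%:R.
Proof.
rewrite (bigID (mem S)) /=; congr (_ + _).
  rewrite (eq_bigr (fun=> 1)) => [|y /andP[_ yS]]; last by rewrite mxE yS.
  by rewrite (eq_bigl (mem [set y in S | e x y])) ?sumr_const // => y; rewrite !inE andbC.
rewrite (eq_bigr (fun=> -1)) => [|y /andP[_ /negbTE yS]]; last by rewrite mxE yS.
rewrite sumrN (eq_bigl (mem [set y in ~: S | e x y])) ?sumr_const //.
by move=> y; rewrite !inE andbC.
Qed.

Lemma signv_mul_adj S x :
  (signv S *m adjmx R e) 0 x = #|[set y in S | e x y]|%:R - #|[set y in ~: S | e x y]|%:R.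
Proof.
rewrite -sum_signv_nbrs mxE [RHS]big_mkcond /=; apply: eq_bigr => y _.
by rewrite !mxE e_sym; case: (e x y); rewrite ?mulr1 ?mulr0.
Qed.

Lemma signv_eigen1 S :
  signv S *m adjmx R e = signv S <-> two_regular_in e S /\ two_regular_in e (~: S).
Proof.
have diff_sign (a b : nat) : (a + b = 3)%N ->
    (a%:R - b%:R == 1 :> R) = (a == 2) /\ (a%:R - b%:R == -1 :> R) = (b == 2).
  move=> ab3; rewrite -eqr_oppLR opprB !subr_eq !nat1r !eqr_nat.
  by split; apply/eqP/eqP; lia.
have eig_at x : ((signv S *m adjmx R e) 0 x == signv S 0 x) =
    if x \in S then #|[set y in S | e x y]| == 2 else #|[set y in ~: S | e x y]| == 2.
  have [+ -] := diff_sign _ _ (card_nbrs_setC e_cubic S x).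
  by rewrite signv_mul_adj mxE; case: (x \in S).
split => [/rowP eig | [S2 C2]].
  by split=> x; rewrite ?inE => xS; apply/eqP;
    have := eig_at x; rewrite eig eqxx ?(negbTE xS) ?xS.
apply/rowP => x; apply/eqP; rewrite eig_at; case: ifP => xS; apply/eqP.
  exact: S2.
by apply: C2; rewrite inE xS.
Qed.
End SignVectors.

Lemma signv_scale (R : numDomainType) n (S V : {set 'I_n}) (c : R) :
  signv R S = c *: signv R V -> S = V \/ S = ~: V.
Proof.
move/rowP=> scaleE.
have {}scaleE x : (if x \in S then 1 else -1) = c * (if x \in V then 1 else -1).
  by have := scaleE x; rewrite !mxE.
have [/forallP sameSV|/forallPn[x diffx]] := boolP [forall x, (x \in S) == (x \in V)].
  by left; apply/setP => x; apply/eqP/sameSV.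
have cN1 : c = -1.
  move: diffx (scaleE x); case: (x \in S); case: (x \in V) => //= _ /eqP.
    by rewrite mulrN1 eq_sym eqr_oppLR => /eqP.
  by rewrite mulr1 eq_sym => /eqP.
right; apply/setP => y; have := scaleE y; rewrite cN1 inE.
case: (y \in S); case: (y \in V); rewrite //= ?mulrN1 ?mulN1r ?opprK => /eqP.
  by rewrite oner_eqN1.
by rewrite eq_sym oner_eqN1.
Qed.

Lemma signv_rank1_eigen (R : numFieldType) n (A : 'M[R]_n) (S V : {set 'I_n}) :
  \rank (eigenspace A 1) = 1%N ->
  signv R S *m A = signv R S -> signv R V *m A = signv R V -> S = V \/ S = ~: V.
Proof.
move=> rank1 eigS eigV.
have eig1 (u : 'rV[R]_n) : u *m A = u -> (u <= eigenspace A 1)%MS.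
  by move=> uA; apply/eigenspaceP; rewrite scale1r.
have V_neq0 : signv R V != 0.
  have n_gt0 : (0 < n)%N by rewrite -rank1 rank_leq_row.
  apply/rV0Pn; exists (Ordinal n_gt0); rewrite mxE.
  by case: ifP; rewrite ?oppr_eq0 oner_eq0.
have /andP[_ eigV_full] : (signv R V == eigenspace A 1)%MS.
  by rewrite -(mxrank_leqif_eq (eig1 _ eigV)).2 rank_rV V_neq0 rank1.
have [c] := sub_rVP (submx_trans (eig1 _ eigS) eigV_full).
exact: signv_scale.
Qed.

Lemma connect_homo (T : finType) (r : rel T) (f : T -> T) :
  {homo f : x y / r x y} -> {homo f : x y / connect r x y}.
Proof.
move=> f_homo x _ /connectP[p Pp ->]; apply/connectP; exists (map f p).
  by rewrite path_map; apply: sub_path Pp => u v /f_homo.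
by rewrite last_map.
Qed.

Lemma perm_imset_eq (T : finType) (s : {perm T}) (A B : {set T}) :
  (forall x, (s x \in B) = (x \in A)) -> s @: A = B.
Proof.
by move=> sAB; apply/setP => y; rewrite -[y](permKV s) mem_imset ?sAB //; apply: perm_inj.
Qed.

Lemma two_regular_in_preimset n (e : rel 'I_n) (s : {perm 'I_n}) (S : {set 'I_n}) :
  is_aut e s -> two_regular_in e S -> two_regular_in e (s @^-1: S).
Proof.
move=> s_aut S2 x; rewrite inE => /S2 <-; rewrite -[RHS](card_preimset _ (@perm_inj _ s)).
by apply: eq_card => y; rewrite !inE s_aut.
Qed.

Section UniqueTwoRegularBipartition.
Variables (n : nat) (e : rel 'I_n) (V : {set 'I_n}).
Hypotheses (e_sym : symmetric e) (e_irr : irreflexive e).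
Hypotheses (e_cubic : cubic e) (e_vt : vertex_transitive e).
Hypotheses (V2 : two_regular_in e V) (VC2 : two_regular_in e (~: V)).
Hypothesis V_unique :
  forall S, two_regular_in e S -> two_regular_in e (~: S) -> S = V \/ S = ~: V.

Local Notation r := (induced_rel e V).
Local Notation M := [set [set x; y] | x in V, y in ~: V & e x y].

Lemma aut_mono_or_swap s : is_aut e s ->
  {mono s : x / x \in V} \/ {mono s : x / x \in V >-> x \notin V}.
Proof.
move=> s_aut; have V2s := two_regular_in_preimset s_aut V2.
have VC2s : two_regular_in e (~: (s @^-1: V)).
  by rewrite -preimsetC; apply: two_regular_in_preimset.
case: (V_unique V2s VC2s) => /setP sV; [left|right] => x; move: (sV x).
  by rewrite !inE => ->.
by rewrite !inE => ->; rewrite negbK.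
Qed.

Lemma aut_cross s x y : is_aut e s ->
  ((s x \in V) != (s y \in V)) = ((x \in V) != (y \in V)).
Proof.
case/aut_mono_or_swap => sV; first by rewrite !sV.
by rewrite -[s x \in V]negbK -[s y \in V]negbK !sV; case: (_ \in _); case: (_ \in _).
Qed.

Lemma unique_cross_nbr x :
  exists y0, forall y, e x y && ((x \in V) != (y \in V)) = (y == y0).
Proof.
have /eqP/cards1P[y0 /setP y0E] : #|[set y | e x y && ((x \in V) != (y \in V))]| = 1%N.
  have := card_nbrs_setC e_cubic V x.
  case xV: (x \in V); [rewrite V2 // | rewrite VC2 ?inE ?xV //]; move=> /eqP.
    rewrite -[3%N]/(2 + 1)%N eqn_add2l => /eqP <-.
    by apply: eq_card => y; rewrite !inE andbC.
  rewrite -[3%N]/(1 + 2)%N eqn_add2r => /eqP <-.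
  by apply: eq_card => y; rewrite !inE; case: (y \in V); rewrite ?andbT ?andbF.
by exists y0 => y; move: (y0E y); rewrite !inE.
Qed.

Lemma card_component_le s x : is_aut e s -> {mono s : y / y \in V} ->
  (#|[set y | connect r x y]| <= #|[set y | connect r (s x) y]|)%N.
Proof.
move=> s_aut sV; rewrite -[X in (_ <= X)%N](card_preimset _ (@perm_inj _ s)).
apply/subset_leq_card/subsetP => y; rewrite !inE; apply: connect_homo => u v.
by rewrite /induced_rel !sV s_aut.
Qed.

Lemma card_component_eq x y : x \in V -> y \in V ->
  #|[set t | connect r x t]| = #|[set t | connect r y t]|.
Proof.
have mono_to u v s : u \in V -> v \in V -> is_aut e s -> s u = v -> {mono s : t / t \in V}.
  move=> uV vV s_aut suv; case: (aut_mono_or_swap s_aut) => // sV.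
  by move: (sV u); rewrite suv uV vV.
move=> xV yV; have [s [s_aut sx]] := e_vt x y; have [s' [s'_aut s'y]] := e_vt y x.
apply/eqP; rewrite eqn_leq.
have := card_component_le x s_aut (mono_to _ _ _ xV yV s_aut sx); rewrite sx => ->.
by have := card_component_le y s'_aut (mono_to _ _ _ yV xV s'_aut s'y); rewrite s'y.
Qed.

Lemma union_of_equal_cycles_V : union_of_equal_cycles e V.
Proof.
have size_cycle x c : uniq c -> (forall y, (y \in c) = connect r x y) ->
    size c = #|[set y | connect r x y]|.
  by move=> Uc cE; rewrite -(card_uniqP Uc); apply: eq_card => y; rewrite inE cE.
have [->|[x0 x0V]] := set_0Vmem V; first by exists 3%N; split => // x; rewrite inE.
have [c [Uc c_gt2 cE _]] := two_regular_component e_sym e_irr V2 x0V.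
exists (size c); split => // x xV.
have [d [Ud _ dE d_edges]] := two_regular_component e_sym e_irr V2 xV.
exists d; split => //.
by rewrite (size_cycle _ _ Ud dE) (size_cycle _ _ Uc cE) (card_component_eq xV x0V).
Qed.

Lemma exists_cross_edge : (0 < n)%N -> exists x y, [/\ x \in V, y \notin V & e x y].
Proof.
move=> n_gt0; set x0 := Ordinal n_gt0; have [y0 /(_ y0)] := unique_cross_nbr x0.
rewrite eqxx => /andP[exy]; case x0V: (x0 \in V); case y0V: (y0 \in V) => // _.
  by exists x0, y0; rewrite x0V y0V.
by exists y0, x0; rewrite x0V y0V e_sym.
Qed.

Lemma induced_iso_setC : (0 < n)%N -> induced_iso e V (~: V).
Proof.
case/exists_cross_edge=> x [y [xV yV _]]; have [s [s_aut sx]] := e_vt x y.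
exists s; split => [u v _ _|| u v _ _]; [exact: perm_inj | | exact: s_aut].
apply: perm_imset_eq => u; rewrite inE.
case: (aut_mono_or_swap s_aut) => sV; last by rewrite sV.
by move: (sV x); rewrite sx xV (negbTE yV).
Qed.

Lemma aut_block_V : aut_block e V.
Proof.
move=> s /aut_mono_or_swap[sV|sV]; first by left; apply: perm_imset_eq.
right; rewrite (@perm_imset_eq _ s V (~: V)) => [|u]; last by rewrite inE sV.
by rewrite disjoints_subset.
Qed.

Lemma aut_block_setC : aut_block e (~: V).
Proof.
move=> s /aut_mono_or_swap[sV|sV].
  by left; apply: perm_imset_eq => u; rewrite !inE sV.
right; rewrite (@perm_imset_eq _ s (~: V) V) => [|u]; last by rewrite inE -[u \in V]sV negbK.
by rewrite disjoints_subset setCK.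
Qed.

Lemma two_regular_bipartition_unique P Q : P :|: Q = setT -> P :&: Q = set0 ->
  two_regular_in e P -> two_regular_in e Q -> [set P; Q] = [set V; ~: V].
Proof.
move=> /setP PQT /setP PQ0 P2 Q2.
have QE : Q = ~: P.
  by apply/setP => x; move: (PQT x) (PQ0 x); rewrite !inE; case: (x \in P); case: (x \in Q).
rewrite QE in Q2 *; case: (V_unique P2 Q2) => ->; first by [].
by rewrite setCK setUC.
Qed.

Lemma mem_cross_edges x y : e x y -> ([set x; y] \in M) = ((x \in V) != (y \in V)).
Proof.
move=> exy; apply/idP/idP => [/imset2P[a b aV] | xy].
  rewrite !inE => /andP[bV _] /setP abE.
  move: exy (abE x) (abE y); rewrite !inE !eqxx orbT /=.
  move=> + /esym/orP[]/eqP xE /esym/orP[]/eqP yE; rewrite xE yE => exy.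
  - by rewrite e_irr in exy.
  - by rewrite aV (negbTE bV).
  - by rewrite aV (negbTE bV).
  - by rewrite e_irr in exy.
case xV: (x \in V) in xy.
  by apply: imset2_f; rewrite // !inE exy andbT; case: (y \in V) xy.
rewrite setUC; apply: imset2_f; first by case: (y \in V) xy.
by rewrite !inE xV e_sym exy.
Qed.

Lemma cross_edge_ends m x : m \in M -> x \in m -> exists2 y, e x y & m = [set x; y].
Proof.
case/imset2P=> a b _; rewrite inE => /andP[_ eab] ->; rewrite !inE => /orP[]/eqP->.
  by exists b.
by exists a; rewrite 1?e_sym // setUC.
Qed.

Lemma perfect_matching_cross_edges : perfect_matching e M.
Proof.
split=> [_ /imset2P[a b _ /[!inE] /andP[_ eab] ->] | x]; first by exists a, b.
have [y0 y0E] := unique_cross_nbr x.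
apply/eqP/cards1P; exists [set x; y0]; apply/setP => m; rewrite !inE.
apply/andP/eqP => [[mM /(cross_edge_ends mM)[y exy mE]] | ->].
  by move: (y0E y); rewrite exy -mem_cross_edges // -mE mM => /esym/eqP <-.
have /andP[exy0 xy0] : e x y0 && ((x \in V) != (y0 \in V)) by rewrite y0E.
by rewrite mem_cross_edges // xy0 !inE eqxx.
Qed.

Lemma aut_fixes_cross_edges : aut_fixes_edgeset e M.
Proof.
move=> s s_aut; apply/eqP; rewrite eqEcard card_imset ?leqnn ?andbT; last first.
  exact/imset_inj/perm_inj.
apply/subsetP => _ /imsetP[m mM ->]; have := mM.
case/imset2P=> a b _ /[!inE] /andP[_ eab] mE; rewrite mE in mM *.
by rewrite imsetU1 imset_set1 mem_cross_edges ?s_aut // aut_cross // -mem_cross_edges.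
Qed.

Lemma aut_arc_transitive_cross_edges : aut_arc_transitive_on e M.
Proof.
move=> x y x' y' [exy xyM] [exy' xyM']; have [s [s_aut sx]] := e_vt x x'.
exists s; split => //; have [y0 y0E] := unique_cross_nbr x'.
have /eqP -> : y' == y0 by rewrite -y0E exy' -mem_cross_edges.
by apply/eqP; rewrite -y0E -sx s_aut exy aut_cross // -mem_cross_edges.
Qed.

End UniqueTwoRegularBipartition.

Theorem lemma4p1 (R : realFieldType) (n : nat) (e : rel 'I_n)
  (Hsimple : simple_graph e) (Hcubic : cubic e) (Hvt : vertex_transitive e)
  (Hsimple1 : \rank (eigenspace (adjmx R e) 1) = 1%N)
  (z : 'rV[R]_n) (Hz : z *m adjmx R e = z)
  (Hpm : forall x, z 0 x = 1 \/ z 0 x = -1) :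
  let Vp := [set x | z 0 x == 1] in
  let Vm := [set x | z 0 x == -1] in
  let M := [set [set x; y] | x in Vp, y in Vm & e x y] in
  [/\ union_of_equal_cycles e Vp,
      induced_iso e Vp Vm /\ aut_block e Vp /\ aut_block e Vm,
      (two_regular_in e Vp /\ two_regular_in e Vm) /\
        (forall P Q : {set 'I_n},
           P :|: Q = setT -> P :&: Q = set0 -> P != set0 -> Q != set0 ->
           two_regular_in e P -> two_regular_in e Q ->
           [set P; Q] = [set Vp; Vm]),
      perfect_matching e M &
      aut_fixes_edgeset e M /\ aut_arc_transitive_on e M].
Proof.
move=> Vp Vm M; have [e_sym e_irr] := Hsimple.
have zE : z = signv R Vp.
  by apply/rowP => x; rewrite !mxE inE; case: (Hpm x) => ->; rewrite ?eqxx // eq_sym oner_eqN1.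
have VmE : Vm = ~: Vp by apply/setP => x; rewrite /Vm zE in_setC -(signv_eqN1 R) inE.
have [V2 VC2] : two_regular_in e Vp /\ two_regular_in e (~: Vp).
  by apply/(signv_eigen1 R e_sym Hcubic); rewrite -zE.
have V_unique S : two_regular_in e S -> two_regular_in e (~: S) -> S = Vp \/ S = ~: Vp.
  move=> S2 SC2; apply: (signv_rank1_eigen Hsimple1); last by rewrite -zE.
  exact/(signv_eigen1 R e_sym Hcubic).
have n_gt0 : (0 < n)%N by rewrite -Hsimple1 rank_leq_row.
rewrite /M VmE; split.
- exact: union_of_equal_cycles_V.
- by split; [exact: induced_iso_setC | split; [exact: aut_block_V | exact: aut_block_setC]].
- by split=> // P Q PQT PQ0 _ _; apply: two_regular_bipartition_unique.
- exact: perfect_matching_cross_edges.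
- by split; [exact: aut_fixes_cross_edges | exact: aut_arc_transitive_cross_edges].
Qed.
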